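(* Let $k$ be a field, $A$ a $k$-algebra, $a_1,\ldots,a_m\in A$, $d\ge1$, and $M_{d,m}=\binom{d+m-1}{m}$. If $P_{\le M_{d,m}}(a_1,\ldots,a_m)\subseteq P_{\le d-1}(a_1,\ldots,a_m)$, then every element of the subspace $ka_1+\cdots+ka_m$ is algebraic over $k$ of degree at most $M_{d,m}$.
   Context: Algebras are associative with unit. For nonnegative integers $i_1,\ldots,i_m$, $p_{i_1,\ldots,i_m}(x_1,\ldots,x_m)$ is the sum of all distinct noncommutative monomials with exactly $i_j$ occurrences of $x_j$ for each $j$ ($p_{0,\ldots,0}=1$); $p_{i_1,\ldots,i_m}(a_1,\ldots,a_m)$ is its evaluation at $x_j=a_j$. $P_n(a_1,\ldots,a_m)=\operatorname{span}_k\{p_{i_1,\ldots,i_m}(a_1,\ldots,a_m)\mid i_1+\cdots+i_m=n\}$ and $P_{\le r}(a_1,\ldots,a_m)=\sum_{n=0}^rP_n(a_1,\ldots,a_m)$. Algebraic of degree at most $D$ means a root of a nonzero polynomial in $k[t]$ of degree at most $D$. *)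

From mathcomp Require Import all_boot all_algebra.
Set Implicit Arguments. Unset Strict Implicit. Unset Printing Implicit Defensive.
Import GRing.Theory.
Local Open Scope ring_scope.

Definition pword (k : fieldType) (A : algType k) (m : nat)
    (a : 'I_m -> A) (i : 'I_m -> nat) : A :=
  \sum_(w : (\sum_(j < m) i j)%N .-tuple 'I_m
          | [forall j : 'I_m, count_mem j w == i j])
     \prod_(l <- w) a l.

(* Exponent vectors with |i| <= r
   have all entries <= r, so they are enumerated by {ffun 'I_m -> 'I_r.+1}. *)
Definition in_P_le (k : fieldType) (A : algType k) (m : nat)
    (a : 'I_m -> A) (r : nat) (x : A) : Prop :=
  exists c : {ffun 'I_m -> 'I_r.+1} -> k,
    x = \sum_(i : {ffun 'I_m -> 'I_r.+1} | (\sum_(j < m) (i j : nat) <= r)%N)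
          c i *: pword a (fun j => (i j : nat)).

Definition Mdm (d m : nat) : nat := 'C(d + m - 1, m).

Definition algebraic_le (k : fieldType) (A : algType k) (D : nat) (x : A) : Prop :=
  exists q : {poly k}, q != 0 /\ (size q <= D.+1)%N /\ horner_alg x q = 0.

From mathcomp Require Import all_boot all_algebra.
Set Implicit Arguments. Unset Strict Implicit. Unset Printing Implicit Defensive.
Import GRing.Theory.
Local Open Scope ring_scope.

(* Expanding x^n for x = c_1 a_1 + ... + c_m a_m and grouping the words by
   their letter counts writes x^n in P_n(a), so for n <= M = M_{d,m} the
   hypothesis puts x^n in P_{<= d-1}(a).  That space is spanned by the p_i(a)
   with |i| <= d-1, and there are at most binom(m+d-1, m) = M such exponent
   vectors i (their partial sums form a nondecreasing m-tuple in {0..d-1}).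
   Hence the M+1 elements 1, x, ..., x^M are linearly dependent. *)

Lemma sum_count_mem (T : finType) (s : seq T) :
  (\sum_(j : T) count_mem j s)%N = size s.
Proof.
elim: s => [|x s IHs] /=; first by rewrite big1.
rewrite big_split /= IHs (bigD1 x) //= eqxx big1 ?addn0 // => j.
by rewrite eq_sym => /negbTE ->.
Qed.

Lemma prod_count_mem (R : comPzSemiRingType) (T : finType) (c : T -> R) (s : seq T) :
  \prod_(l <- s) c l = \prod_(j : T) c j ^+ count_mem j s.
Proof.
elim: s => [|x s IHs]; first by rewrite big_nil big1 // => j _; rewrite expr0.
rewrite big_cons IHs /=.
rewrite [RHS](eq_bigr (fun j => c j ^+ (x == j) * c j ^+ count_mem j s));
  last by move=> j _; rewrite exprD.
rewrite big_split /= [X in _ = X * _](bigD1 x) //= eqxx expr1.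
rewrite (big1 _ (fun i => i != x)) ?mulr1 // => j.
by rewrite eq_sym => /negbTE ->.
Qed.

Lemma expr_lincomb_tuples (R : comNzRingType) (A : algType R) (T : finType)
    (a : T -> A) (c : T -> R) (n : nat) :
  (\sum_(j : T) c j *: a j) ^+ n =
    \sum_(w : n.-tuple T) (\prod_(l <- w) c l) *: \prod_(l <- w) a l.
Proof.
rewrite -[n in LHS]card_ord -prodr_const bigA_distr_bigA /=.
rewrite (reindex (@tuple_of_finfun _ n)) /=; last first.
  by exists (@finfun_of_tuple _ n) => t _;
    [apply: tuple_of_finfunK | apply: finfun_of_tupleK].
apply: eq_bigr => f _; rewrite -scaler_prod big_map.
by apply: congr_big => //; rewrite enumT /index_enum unlock.
Qed.

Section CountVector.
Variables (m r : nat).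

Definition count_vec (w : seq 'I_m) : {ffun 'I_m -> 'I_r.+1} :=
  [ffun j => inord (count_mem j w)].

Variable w : seq 'I_m.
Hypothesis size_w : (size w <= r)%N.

Lemma count_vecE j : count_vec w j = count_mem j w :> nat.
Proof. by rewrite ffunE inordK // ltnS (leq_trans (count_size _ _)). Qed.

Lemma count_vec_eq (i : {ffun 'I_m -> 'I_r.+1}) :
  (count_vec w == i) = [forall j, count_mem j w == i j].
Proof.
apply/eqP/forallP => [<- j | w_i]; first by rewrite count_vecE.
by apply/ffunP => j; apply/val_inj; rewrite /= count_vecE (eqP (w_i j)).
Qed.

Lemma sum_count_vec : (\sum_(j < m) count_vec w j)%N = size w.
Proof. by rewrite -sum_count_mem; apply: eq_bigr => j _; rewrite count_vecE. Qed.

End CountVector.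

Lemma expr_lincomb_in_P_le (k : fieldType) (A : algType k) (m : nat)
    (a : 'I_m -> A) (c : 'I_m -> k) (n r : nat) :
  (n <= r)%N -> in_P_le a r ((\sum_(j < m) c j *: a j) ^+ n).
Proof.
move=> le_nr; rewrite expr_lincomb_tuples.
have size_w (w : n.-tuple 'I_m) : (size w <= r)%N by rewrite size_tuple.
exists (fun i : {ffun 'I_m -> 'I_r.+1} =>
  if (\sum_(j < m) (i j : nat) == n)%N then \prod_(j < m) c j ^+ i j else 0).
rewrite (partition_big (fun w : n.-tuple 'I_m => count_vec r w)
   (fun i : {ffun 'I_m -> 'I_r.+1} => (\sum_(j < m) (i j : nat) <= r)%N)) /=;
  last by move=> w _; rewrite sum_count_vec.
apply: eq_bigr => i _; case: eqP => [sum_i | sum_i]; last first.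
  rewrite scale0r big_pred0 // => w; rewrite count_vec_eq //.
  apply/negP => /forallP w_i; apply: sum_i.
  rewrite -(size_tuple w) -sum_count_mem.
  by apply: eq_bigr => j _; rewrite (eqP (w_i j)).
rewrite /pword scaler_sumr.
(* transport the tuple length in [pword] along [sum_i] *)
move: (\sum_(j < m) (i j : nat))%N sum_i => s sum_i; subst s.
apply: eq_big => w; first by rewrite count_vec_eq.
move=> /eqP <-{i}; rewrite prod_count_mem; congr (_ *: _).
by apply: eq_bigr => j _; rewrite count_vecE.
Qed.

Section ExponentCount.
Local Open Scope nat_scope.
Variables (m r : nat).
Implicit Types i : {ffun 'I_m -> 'I_r.+1}.

Definition prefix_sum i (j : nat) : nat := \sum_(l < m | l < j) i l.

Lemma prefix_sum0 i : prefix_sum i 0 = 0.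
Proof. by rewrite /prefix_sum big_pred0. Qed.

Lemma prefix_sumS i (j : 'I_m) : prefix_sum i j.+1 = prefix_sum i j + i j.
Proof.
rewrite /prefix_sum (bigD1 j) //= addnC; congr (_ + _).
by apply: eq_bigl => l; rewrite ltnS andbC -ltn_neqAle.
Qed.

Lemma prefix_sum_homo i : {homo prefix_sum i : j1 j2 / j1 <= j2}.
Proof.
move=> j1 j2 le_j12.
apply: (sub_le_big (op := addn) leqnn (fun x y => leq_addr y x)) => l lt_lj1.
exact: leq_trans lt_lj1 le_j12.
Qed.

Lemma prefix_sum_le_total i j : prefix_sum i j <= \sum_(l < m) i l.
Proof. exact: (sub_le_big (op := addn) leqnn (fun x y => leq_addr y x)). Qed.

Lemma prefix_sum_inj i1 i2 :
  (forall j : 'I_m, prefix_sum i1 j.+1 = prefix_sum i2 j.+1) -> i1 = i2.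
Proof.
move=> eq_i12; apply/ffunP => j; apply/val_inj.
have eq_before : prefix_sum i1 j = prefix_sum i2 j.
  case: j => [[|j] lt_jm] /=; first by rewrite !prefix_sum0.
  exact: (eq_i12 (Ordinal (ltnW lt_jm))).
by apply/eqP; rewrite -(eqn_add2l (prefix_sum i1 j)) {2}eq_before -!prefix_sumS eq_i12.
Qed.

Lemma card_exponents_le :
  #|[pred i : {ffun 'I_m -> 'I_r.+1} | \sum_(j < m) (i j : nat) <= r]|
    <= 'C(m + r, m).
Proof.
pose ps i : m.-tuple 'I_r.+1 := [tuple inord (prefix_sum i j.+1) | j < m].
have inordE i j : \sum_(l < m) (i l : nat) <= r ->
    (inord (prefix_sum i j) : 'I_r.+1) = prefix_sum i j :> nat.
  by move=> sum_i; rewrite inordK // ltnS (leq_trans (prefix_sum_le_total _ _)).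
rewrite -card_sorted_tuples -(@card_in_imset _ _ ps); last first.
  move=> i1 i2 sum_i1 sum_i2 eq_ps; apply: prefix_sum_inj => j.
  have := congr1 (fun t => val (tnth t j)) eq_ps.
  by rewrite /= !tnth_map !tnth_ord_tuple !inordE.
apply/subset_leq_card/subsetP => _ /imsetP[i sum_i ->]; rewrite inE.
have -> : map val (ps i) = map (prefix_sum i \o S) (iota 0 m).
  by rewrite -val_enum_ord -!map_comp; apply: eq_map => j /=; rewrite inordE.
apply: (homo_sorted _ _ (iota_sorted 0 m)) => j1 j2 le_j12.
by apply: prefix_sum_homo; rewrite ltnS.
Qed.

End ExponentCount.

Lemma exists_nonzero_left_kernel (F : fieldType) (p n : nat) (C : 'M[F]_(p, n)) :
  (n < p)%N -> exists2 u : 'rV_p, u != 0 & u *m C = 0.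
Proof.
move=> lt_np; have /rowV0Pn[u /sub_kermxP uC u_neq0] : kermx C != 0.
  rewrite -mxrank_eq0 mxrank_ker subn_eq0 -ltnNge.
  exact: leq_ltn_trans (rank_leq_col C) lt_np.
by exists u.
Qed.

Lemma horner_alg_poly (R : nzSemiRingType) (A : semiAlgType R) (x : A) (n : nat)
    (f : nat -> R) :
  horner_alg x (\poly_(i < n) f i) = \sum_(i < n) f i *: x ^+ i.
Proof.
rewrite poly_def raddf_sum; apply: eq_bigr => i _.
by rewrite /= -mul_polyC rmorphM /= horner_algC rmorphXn /= horner_algX mulr_algl.
Qed.

Lemma algebraic_le_of_powers_in_span (k : fieldType) (A : algType k) (I : finType)
    (S : {pred I}) (v : I -> A) (D : nat) (x : A) :
  (#|S| <= D)%N ->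
  (forall n, (n <= D)%N -> exists e : I -> k, x ^+ n = \sum_(i in S) e i *: v i) ->
  algebraic_le D x.
Proof.
move=> card_S pow_span.
have /fin_all_exists[e eE] (n : 'I_D.+1) :
    exists e : I -> k, x ^+ n = \sum_(i in S) e i *: v i.
  by apply: pow_span; rewrite -ltnS.
pose C : 'M[k]_(D.+1, #|S|) := \matrix_(n, j) e n (enum_val j).
have [u u_neq0 uC] := exists_nonzero_left_kernel C (leq_ltn_trans card_S (ltnSn D)).
exists (\poly_(n < D.+1) u 0 (inord n)); split; [|split].
- apply: contra_neq u_neq0 => u_poly0; apply/rowP => n.
  by have := congr1 (coefp n) u_poly0; rewrite /= coef_poly ltn_ord inord_val coef0 !mxE.
- exact: size_poly.
rewrite horner_alg_poly.
under eq_bigr => n _ do rewrite inord_val eE scaler_sumr big_enum_val.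
rewrite exchange_big big1 // => j _.
have uCj : \sum_(n < D.+1) u 0 n * e n (enum_val j) = 0.
  have := congr1 (fun M : 'M_(1, #|S|) => M 0 j) uC; rewrite !mxE => uC0.
  by rewrite -[RHS]uC0; apply: eq_bigr => n _; rewrite mxE.
under eq_bigr do rewrite scalerA.
by rewrite -scaler_suml uCj scale0r.
Qed.

Theorem lemma3p5 (k : fieldType) (A : algType k) (m : nat) (a : 'I_m -> A)
    (d : nat) (hd : (1 <= d)%N) :
  (forall x : A, in_P_le a (Mdm d m) x -> in_P_le a d.-1 x) ->
  forall c : 'I_m -> k, algebraic_le (Mdm d m) (\sum_(j < m) c j *: a j).
Proof.
case: d hd => [//|d] _ P_le_drop c.
apply: (algebraic_le_of_powers_in_span
  (S := [pred i : {ffun 'I_m -> 'I_d.+1} | \sum_(j < m) (i j : nat) <= d]%N)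
  (v := fun i => pword a (fun j => i j : nat))).
  by rewrite /Mdm addSn subn1 addnC card_exponents_le.
by move=> n le_nM; apply/P_le_drop/expr_lincomb_in_P_le.
Qed.
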